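(* Let $S\subset\mathbb{P}^6$ be the surface defined by $$x_1^2-x_2x_4=x_1x_5-x_3x_4=x_1x_3-x_2x_5=x_1x_6-x_3x_5=x_2x_6-x_3^2=x_4x_6-x_5^2=0,$$ $$x_1^2+x_1x_4+x_5x_7=x_1x_2+x_1^2+x_3x_7=x_1x_3+x_1x_5+x_6x_7=0,$$ let $U\subset S$ be the complement in $S$ of the three lines $x_1=x_2=x_3=x_5=x_6=0$, $x_1=x_3=x_4=x_5=x_6=0$, and $x_3=x_5=x_6=x_1+x_4=x_1+x_2=0$, and let $N_U(B)=\#\{x\in U(\mathbb{Q}):H(x)\leq B\}$. For $s_0\in\mathbb{R}$, $\mathbf{s}=(s_1,s_2,s_3)$, $\mathbf{y}=(y_1,y_2,y_3)\in\mathbb{R}^3$ define $$\Psi(s_0,\mathbf{s},\mathbf{y})=\max\{|s_0^3s_1^2s_2^2s_3^2|,\ |y_1y_2y_3|,\ |s_0s_1^2y_1^2|,\ |s_0s_2^2y_2^2|\}.$$ Then $$N_U(B)=2\,\#\left\{(s_0,\mathbf{s},\mathbf{y})\in\mathbb{Z}^7:\ \begin{array}{l}\Psi(s_0,\mathbf{s},\mathbf{y})\leq B,\ \ s_1y_1-s_2y_2+s_3y_3=0,\\ s_0,s_1,s_2,s_3,y_1>0,\\ \gcd(y_i,s_0s_js_k)=1,\ \gcd(s_i,s_j)=1\end{array}\right\}+O(B),$$ where in the coprimality conditions $\{i,j,k\}$ runs over all permutations of $\{1,2,3\}$.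
   Context: For $x\in\mathbb{P}^{6}(\mathbb{Q})$ written as $x=[\mathbf{x}]$ with $\mathbf{x}\in\mathbb{Z}^7$ primitive, $H(x)=\max_i|x_i|$. The $O$-constant is absolute; $B\geq 1$. *)

From mathcomp Require Import all_boot all_order all_algebra.
From mathcomp Require Import reals.
Set Implicit Arguments. Unset Strict Implicit. Unset Printing Implicit Defensive.
Import Order.TTheory GRing.Theory Num.Theory.
Local Open Scope ring_scope.

Definition zrange (K : nat) : seq int :=
  [seq (i%:Z - K%:Z) | i <- iota 0 (2 * K).+1].

Fixpoint box (n K : nat) : seq (seq int) :=
  if n is n'.+1 then [seq a :: v | a <- zrange K, v <- box n' K] else [:: [::]].

Definition gcd_seq (s : seq int) : int := foldr gcdz 0 s.
Definition primitive (s : seq int) : bool := gcd_seq s == 1.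

Definition height (s : seq int) : nat := foldr maxn 0%N (map absz s).

(* x and -x represent the same point of P^6; we pick the representative
   whose first nonzero coordinate is positive. *)
Definition first_nz_pos (s : seq int) : bool :=
  if [seq a <- s | a != 0] is a :: _ then 0 < a else false.

Definition onS (x1 x2 x3 x4 x5 x6 x7 : int) : bool :=
  [&& x1 ^+ 2 - x2 * x4 == 0, x1 * x5 - x3 * x4 == 0, x1 * x3 - x2 * x5 == 0,
      x1 * x6 - x3 * x5 == 0, x2 * x6 - x3 ^+ 2 == 0, x4 * x6 - x5 ^+ 2 == 0,
      x1 ^+ 2 + x1 * x4 + x5 * x7 == 0, x1 * x2 + x1 ^+ 2 + x3 * x7 == 0
    & x1 * x3 + x1 * x5 + x6 * x7 == 0].

Definition line1 (x1 x2 x3 x4 x5 x6 x7 : int) : bool :=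
  [&& x1 == 0, x2 == 0, x3 == 0, x5 == 0 & x6 == 0].
Definition line2 (x1 x2 x3 x4 x5 x6 x7 : int) : bool :=
  [&& x1 == 0, x3 == 0, x4 == 0, x5 == 0 & x6 == 0].
Definition line3 (x1 x2 x3 x4 x5 x6 x7 : int) : bool :=
  [&& x3 == 0, x5 == 0, x6 == 0, x1 + x4 == 0 & x1 + x2 == 0].

Definition inU (x1 x2 x3 x4 x5 x6 x7 : int) : bool :=
  [&& onS x1 x2 x3 x4 x5 x6 x7, ~~ line1 x1 x2 x3 x4 x5 x6 x7,
      ~~ line2 x1 x2 x3 x4 x5 x6 x7 & ~~ line3 x1 x2 x3 x4 x5 x6 x7].

Definition app7 (P : int -> int -> int -> int -> int -> int -> int -> bool)
  (s : seq int) : bool :=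
  P (nth 0 s 0) (nth 0 s 1) (nth 0 s 2) (nth 0 s 3) (nth 0 s 4) (nth 0 s 5)
    (nth 0 s 6).

(* N_U(B) = #{x in U(Q) : H(x) <= B}; each rational point is counted through
   its unique primitive integer representative with first nonzero coordinate
   positive.  Every such representative with H(x) <= B lies in box 7 (trunc B). *)
Definition N_U (R : realType) (B : R) : nat :=
  count (fun s => [&& primitive s, first_nz_pos s, app7 inU s
                    & (height s)%:R <= B]) (box 7 (Num.truncn B)).

Definition Psi (R : realType) (s0 s1 s2 s3 y1 y2 y3 : int) : R :=
  Num.max (Num.max (`|s0 ^+ 3 * s1 ^+ 2 * s2 ^+ 2 * s3 ^+ 2|%:~R)
                   (`|y1 * y2 * y3|%:~R))
          (Num.max (`|s0 * s1 ^+ 2 * y1 ^+ 2|%:~R)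
                   (`|s0 * s2 ^+ 2 * y2 ^+ 2|%:~R)).

Definition Tcond (R : realType) (B : R) (s0 s1 s2 s3 y1 y2 y3 : int) : bool :=
  [&& Psi R s0 s1 s2 s3 y1 y2 y3 <= B,
      s1 * y1 - s2 * y2 + s3 * y3 == 0,
      [&& 0 < s0, 0 < s1, 0 < s2, 0 < s3 & 0 < y1],
      [&& coprimez y1 (s0 * s2 * s3), coprimez y2 (s0 * s1 * s3)
        & coprimez y3 (s0 * s1 * s2)]
    & [&& coprimez s1 s2, coprimez s1 s3 & coprimez s2 s3]].

(* #{(s0,s,y) in Z^7 : ...}; every element of this set has all coordinates
   bounded by B in absolute value, hence lies in box 7 (trunc B). *)
Definition T_count (R : realType) (B : R) : nat :=
  count (fun v => Tcond B (nth 0 v 0) (nth 0 v 1) (nth 0 v 2) (nth 0 v 3)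
                    (nth 0 v 4) (nth 0 v 5) (nth 0 v 6))
        (box 7 (Num.truncn B)).

From mathcomp Require Import all_boot all_order all_algebra.
From mathcomp Require Import reals.
From mathcomp Require Import zify ring.
Import Order.TTheory GRing.Theory Num.Theory.
Local Open Scope ring_scope.
Set Implicit Arguments. Unset Strict Implicit. Unset Printing Implicit Defensive.

(* The quadrics defining S say that (x1, ..., x6) is l (ab, a^2, ca, b^2, cb, c^2)
   with gcd(a, b, c) = 1, and the three cubics then reduce to
   c x7 = - l a b (a + b).  On U one has x6 = l c^2 <> 0 (x6 = 0 forces a point
   onto one of the removed lines), so up to sign l, c > 0.  With
   s1 = gcd(c, a), s2 = gcd(c, b), s3 = gcd(c, a + b), which are pairwise
   coprime with s1 s2 s3 | c, one writes c = s0 s1 s2 s3, a = s1 y1,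
   b = - s2 y2, a + b = - s3 y3; primitivity of the point then forces l = s0
   and x7 = - y1 y2 y3.  This is a bijection between the points of height at
   most B and the integral solutions with Psi <= B, because H = Psi on its
   image.  Finally y |-> -y exchanges the solutions with y1 > 0 and y1 < 0,
   while y1 = 0 forces s0 = s2 = s3 = 1 and y3 = y2, leaving at most
   (2 sqrt B + 1)^2 = O(B) solutions. *)

Lemma mem_zrange (K : nat) (a : int) : (a \in zrange K) = (`|a| <= K)%N.
Proof.
apply/mapP/idP => [[i] | ].
  rewrite mem_iota add0n => /andP[_ hi] ->.
  rewrite -lez_nat abszE ler_norml; apply/andP; split; lia.
rewrite -lez_nat abszE ler_norml => /andP[h1 h2].
have aK : a + K%:Z = absz (a + K%:Z) by rewrite gez0_abs; lia.
exists (absz (a + K%:Z)); last by rewrite -aK addrK.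
by rewrite mem_iota add0n leq0n /= -ltz_nat -aK; lia.
Qed.

Lemma zrange_uniq (K : nat) : uniq (zrange K).
Proof. by rewrite map_inj_uniq ?iota_uniq // => i j /= /addIr []. Qed.

Lemma box_cons (n K : nat) :
  box n.+1 K = [seq a :: w | a <- zrange K, w <- box n K].
Proof. by []. Qed.

Lemma mem_box (n K : nat) (v : seq int) :
  (v \in box n K) = (size v == n) && all (fun a => `|a| <= K)%N v.
Proof.
elim: n v => [|n IH] [|a w] //; rewrite box_cons.
  by apply/allpairsP => -[[b u] /= [_ _]].
apply/allpairsP/idP => [[[b u] /= [hb hu [-> ->]]] | /= /andP[hs /andP[ha hw]]].
  by rewrite -(mem_zrange K) hb -IH.
by exists (a, w); rewrite /= mem_zrange IH -eqSS hs ha hw.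
Qed.

Lemma box_uniq (n K : nat) : uniq (box n K).
Proof.
elim: n => [|n IH] //; rewrite box_cons allpairs_uniq ?zrange_uniq //.
by move=> [a v] [b w] _ _ /= [-> ->].
Qed.

Lemma size_box (n K : nat) : size (box n K) = ((2 * K).+1 ^ n)%N.
Proof.
by elim: n => [|n IH] //; rewrite box_cons size_allpairs IH size_map size_iota expnS.
Qed.

Lemma size_mem_box (n K : nat) (v : seq int) : v \in box n K -> size v = n.
Proof. by rewrite mem_box => /andP[/eqP]. Qed.

Lemma all_abs_le_opp (K : nat) (x : seq int) :
  all (fun a => `|a| <= K)%N (map -%R x) = all (fun a => `|a| <= K)%N x.
Proof. by rewrite all_map; apply: eq_all => a /=; rewrite abszN. Qed.

Lemma box_opp (n K : nat) (x : seq int) : x \in box n K -> map -%R x \in box n K.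
Proof. by rewrite !mem_box size_map all_abs_le_opp. Qed.

Lemma seq7_nth (x : seq int) : size x = 7%N ->
  x = [:: nth 0 x 0; nth 0 x 1; nth 0 x 2; nth 0 x 3; nth 0 x 4; nth 0 x 5; nth 0 x 6].
Proof. by do 7 (case: x => [|? x] //); case: x. Qed.

Section Counting.
Context {T1 T2 : eqType}.

Lemma count_le_inj (f : T1 -> T2) (a : pred T1) (b : pred T2) s1 s2 :
  uniq s1 -> {in s1, forall x, a x -> b (f x) && (f x \in s2)} ->
  {in [predI s1 & a] &, injective f} -> (count a s1 <= count b s2)%N.
Proof.
move=> u1 hf hinj; rewrite -!size_filter -(size_map f).
apply: uniq_leq_size => [|y /mapP[x]].
  rewrite map_inj_in_uniq ?filter_uniq // => x y.
  by rewrite !mem_filter => xa ya; apply: hinj; rewrite inE /= andbC.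
by rewrite !mem_filter => /andP[ax xs] ->; apply: hf.
Qed.

Lemma count_le_surj (f : T1 -> T2) (a : pred T1) (b : pred T2) s1 s2 :
  uniq s2 -> {in s2, forall y, b y -> exists2 x, (x \in s1) && a x & f x = y} ->
  (count b s2 <= count a s1)%N.
Proof.
move=> u2 hs; rewrite -!size_filter -(size_map f (filter a s1)).
apply: uniq_leq_size => [|y]; first by rewrite filter_uniq.
rewrite mem_filter => /andP[hb ys].
by have [x xa <-] := hs y ys hb; rewrite map_f // mem_filter andbC.
Qed.

End Counting.

Lemma count_involution (T : eqType) (f : T -> T) (a b : pred T) (s : seq T) :
  uniq s -> involutive f -> {in s, forall x, f x \in s} ->
  {in s, forall x, a x -> b (f x)} -> {in s, forall x, b x -> a (f x)} ->
  count a s = count b s.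
Proof.
move=> us fK fs ab ba.
apply/eqP; rewrite eqn_leq; apply/andP; split; apply: (count_le_inj (f := f)) => //.
- by move=> x xs /(ab x xs) ->; rewrite fs.
- by move=> x y _ _; apply: (can_inj fK).
- by move=> x xs /(ba x xs) ->; rewrite fs.
- by move=> x y _ _; apply: (can_inj fK).
Qed.

Lemma count_split (T : Type) (a p : pred T) (s : seq T) :
  count a s = (count (predI a p) s + count (predI a (predC p)) s)%N.
Proof. by elim: s => //= x s ->; case: (a x) (p x) => [] [] /=; lia. Qed.

Lemma count_halves (T : eqType) (f : T -> T) (P q : pred T) (s : seq T) :
  uniq s -> involutive f -> {in s, forall x, f x \in s} ->
  {in s, forall x, P (f x) = P x} -> {in s, forall x, P x -> q (f x) = ~~ q x} ->
  count P s = (count (predI P q) s).*2.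
Proof.
move=> us fK fs fP fq; rewrite (count_split P q) -addnn; congr addn.
apply: (count_involution us fK fs) => x xs /= /andP[Px qx];
  by rewrite fP // Px fq // qx.
Qed.

Lemma prime_dvdzM (p : nat) (m n : int) : prime p ->
  (p%:Z %| m * n)%Z = (p%:Z %| m)%Z || (p%:Z %| n)%Z.
Proof. by move=> pp; rewrite !dvdzE abszM /= Euclid_dvdM. Qed.

Lemma gcdz_ge0 (m n : int) : 0 <= gcdz m n.
Proof. exact: le0z_nat. Qed.

Lemma gcdz_gt0 (m n : int) : m != 0 -> 0 < gcdz m n.
Proof. by move=> m0; rewrite lt0r gcdz_ge0 gcdz_eq0 negb_and m0. Qed.

Lemma coprimez_primeP (m n : int) :
  reflect (forall p : nat, prime p -> (p%:Z %| m)%Z -> (p%:Z %| n)%Z -> False)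
          (coprimez m n).
Proof.
apply: (iffP idP) => [/eqP g1 p pp pm pn | noprime].
  have : (p %| gcdn `|m| `|n|)%N by move: pm pn; rewrite !dvdzE dvdn_gcd => -> ->.
  by move: g1; rewrite /gcdz => -[->]; rewrite dvdn1 => /eqP p1; rewrite p1 in pp.
rewrite /coprimez; have [g0|g0] := eqVneq (gcdz m n) 0.
  move/eqP: g0; rewrite gcdz_eq0 => /andP[/eqP m0 /eqP n0]; exfalso.
  by apply: (noprime 2%N); [exact: (erefl true) | rewrite m0 | rewrite n0].
have [g1|g1] := eqVneq (gcdz m n) 1; first exact/eqP.
have g_gt1 : (1 < `|gcdz m n|)%N.
  by move: g0 g1; rewrite /gcdz; case: (gcdn _ _) => [|[|k]].
have pg : ((pdiv `|gcdz m n|)%:Z %| gcdz m n)%Z by rewrite dvdzE /= pdiv_dvd.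
exfalso; apply: (noprime (pdiv `|gcdz m n|)); first exact: pdiv_prime.
  exact: dvdz_trans pg (dvdz_gcdl m n).
exact: dvdz_trans pg (dvdz_gcdr m n).
Qed.

Lemma dvdz_eq1 (d : int) : 0 <= d -> (d %| 1)%Z -> d = 1.
Proof. by move=> d0; rewrite dvdz1 => /eqP d1; rewrite -(gez0_abs d0) d1. Qed.

Lemma coprimez_dvd (m n d : int) : (gcdz m n %| d)%Z -> (d %| 1)%Z -> coprimez m n.
Proof. by move=> gd d1; apply/eqP/dvdz_eq1/(dvdz_trans gd d1)/gcdz_ge0. Qed.

Lemma coprime0z_eq1 (m : int) : 0 < m -> coprimez 0 m -> m = 1.
Proof.
by move=> m_gt0; rewrite /coprimez gcd0z => /eqP m1; rewrite -(gtz0_abs m_gt0) m1.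
Qed.

Lemma dvdz_anti_pos (a b : int) : 0 < a -> 0 < b -> (a %| b)%Z -> (b %| a)%Z -> a = b.
Proof.
move=> a0 b0 ab ba; rewrite -(gtz0_abs a0) -(gtz0_abs b0); congr Posz.
by apply/eqP; rewrite eqn_dvd -!dvdzE ab ba.
Qed.

Lemma gcdzMl_eq (s m y : int) : 0 < s -> (gcdz (s * m) (s * y) == s) = coprimez y m.
Proof.
move=> s_gt0; rewrite -mulz_gcdr gtz0_abs // coprimez_sym /coprimez.
by rewrite -{2}[s]mulr1 (inj_eq (mulfI (lt0r_neq0 s_gt0))).
Qed.

Lemma factor_gcdz3 (u v w : int) : w != 0 ->
  exists a b c g, [/\ 0 < g, coprimez (gcdz a b) c, u = a * g, v = b * g & w = c * g].
Proof.
move=> w_neq0; set g := gcdz (gcdz u v) w.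
have g_gt0 : 0 < g by rewrite lt0r gcdz_ge0 gcdz_eq0 negb_and w_neq0 orbT.
have [a uE] := dvdzP (dvdz_trans (dvdz_gcdl (gcdz u v) w) (dvdz_gcdl u v)).
have [b vE] := dvdzP (dvdz_trans (dvdz_gcdl (gcdz u v) w) (dvdz_gcdr u v)).
have [c wE] := dvdzP (dvdz_gcdr (gcdz u v) w).
exists a, b, c, g; split => //.
have gcdzMg m n : gcdz m n * g = gcdz (m * g) (n * g) by rewrite -mulz_gcdl gtz0_abs.
by apply/eqP/(mulIf (lt0r_neq0 g_gt0)); rewrite mul1r !gcdzMg -uE -vE -wE.
Qed.

(* Square a Bezout relation [u a + v b + w c = 1]. *)
Lemma dvdz_quadratic (d l a b c : int) : coprimez (gcdz a b) c ->
  (d %| l * a * b)%Z -> (d %| l * a ^+ 2)%Z -> (d %| l * c * a)%Z ->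
  (d %| l * b ^+ 2)%Z -> (d %| l * c * b)%Z -> (d %| l * c ^+ 2)%Z ->
  (d %| l)%Z.
Proof.
move=> /coprimezP[[u w] /= uw] dab daa dca dbb dcb dcc.
have [u1 [v1 uv]] := Bezoutz a b.
have [U [V [W e]]] : exists U V W, U * a + V * b + W * c = 1.
  by exists (u * u1), (u * v1), w; rewrite -uw -uv; ring.
have -> : l = U ^+ 2 * (l * a ^+ 2) + V ^+ 2 * (l * b ^+ 2) + W ^+ 2 * (l * c ^+ 2)
    + (2 * U * V) * (l * a * b) + (2 * U * W) * (l * c * a) + (2 * V * W) * (l * c * b).
  by transitivity (l * (U * a + V * b + W * c) ^+ 2); [rewrite e expr1n mulr1 | ring].
by rewrite !rpredD // dvdz_mull.
Qed.

Lemma coprimez_gcd_pairwise (a b c : int) : coprimez (gcdz a b) c ->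
  [/\ coprimez (gcdz c a) (gcdz c b), coprimez (gcdz c a) (gcdz c (a + b))
    & coprimez (gcdz c b) (gcdz c (a + b))].
Proof.
move=> abc.
have key u v : (u %| c)%Z -> (gcdz u v %| a)%Z -> (gcdz u v %| b)%Z -> coprimez u v.
  move=> uc ga gb; apply: (@coprimez_dvd _ _ (gcdz (gcdz a b) c)); last by rewrite (eqP abc).
  by rewrite !dvdz_gcd ga gb (dvdz_trans (dvdz_gcdl u v) uc).
have dvd_gcdl u v w : (u %| w)%Z -> (gcdz u v %| w)%Z := dvdz_trans (dvdz_gcdl u v).
have dvd_gcdr u v w : (v %| w)%Z -> (gcdz u v %| w)%Z := dvdz_trans (dvdz_gcdr u v).
have := dvdz_gcdr c a; have := dvdz_gcdr c b; have := dvdz_gcdr c (a + b).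
move=> cab cb ca; split.
- exact: key (dvdz_gcdl c a) (dvd_gcdl _ _ _ ca) (dvd_gcdr _ _ _ cb).
- have ga := dvd_gcdl (gcdz c a) (gcdz c (a + b)) _ ca.
  apply: key (dvdz_gcdl c a) (ga) _; rewrite -[X in (_ %| X)%Z](addKr a b).
  exact: rpredD (rpredNr ga) (dvd_gcdr _ _ _ cab).
- have gb := dvd_gcdl (gcdz c b) (gcdz c (a + b)) _ cb.
  apply: key (dvdz_gcdl c b) _ (gb); rewrite -[X in (_ %| X)%Z](addrK b a).
  exact: rpredB (dvd_gcdr _ _ _ cab) gb.
Qed.

Lemma nth_opp (x : seq int) (i : nat) : nth 0 (map -%R x) i = - nth 0 x i.
Proof.
case: (ltnP i (size x)) => hi; first by rewrite (nth_map 0).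
by rewrite !nth_default ?size_map ?oppr0.
Qed.

Lemma inU_opp x1 x2 x3 x4 x5 x6 x7 :
  inU (- x1) (- x2) (- x3) (- x4) (- x5) (- x6) (- x7) = inU x1 x2 x3 x4 x5 x6 x7.
Proof.
by rewrite /inU /onS /line1 /line2 /line3 !sqrrN !mulrNN -!opprD !oppr_eq0.
Qed.

Lemma app7_inU_opp (x : seq int) : app7 inU (map -%R x) = app7 inU x.
Proof. by rewrite /app7 !nth_opp inU_opp. Qed.

Lemma dvdz_gcd_seq (d : int) (x : seq int) :
  (d %| gcd_seq x)%Z = all (fun a => d %| a)%Z x.
Proof. by elim: x => [|a x IH] /=; rewrite ?dvdz0 // dvdz_gcd IH. Qed.

Lemma primitive_opp (x : seq int) : primitive (map -%R x) = primitive x.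
Proof.
rewrite /primitive; congr (_ == 1).
by elim: x => [|a x IH] //=; rewrite gcdNz IH.
Qed.

Lemma height_opp (x : seq int) : height (map -%R x) = height x.
Proof. by elim: x => [|a x IH] //=; rewrite /height /= abszN; congr maxn. Qed.

Lemma first_nz_pos_opp (x : seq int) : has (fun a => a != 0) x ->
  first_nz_pos (map -%R x) = ~~ first_nz_pos x.
Proof.
rewrite /first_nz_pos filter_map has_filter.
have -> : [seq a <- x | preim -%R (fun a => a != 0) a] = [seq a <- x | a != 0].
  by apply: eq_filter => a; rewrite /= oppr_eq0.
have : all (fun a => a != 0) [seq a <- x | a != 0] by apply: filter_all.
case: [seq a <- x | a != 0] => [|a s] //= /andP[a0 _] _.
by rewrite oppr_gt0 ltNge le_eqVlt eq_sym (negbTE a0).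
Qed.

Lemma height_le (R : realType) (B : R) (x : seq int) : 0 <= B ->
  ((height x)%:R <= B) = all (fun a => `|a|%:~R <= B) x.
Proof.
move=> B0; elim: x => [|a x IH] //=.
by rewrite /height /= natr_max ge_max natr_absz -IH.
Qed.

Lemma inU_x6_neq0 x1 x2 x3 x4 x5 x6 x7 : inU x1 x2 x3 x4 x5 x6 x7 -> x6 != 0.
Proof.
move=> /and4P[hS n1 n2 n3]; apply/eqP => x60; subst x6.
move: hS => /and5P[/eqP q1 _ _ _ /and5P[/eqP q5 /eqP q6 /eqP q7 /eqP q8 _]].
have x30 : x3 = 0 by apply/eqP; rewrite -sqrf_eq0 -oppr_eq0; apply/eqP; rewrite -q5; ring.
have x50 : x5 = 0 by apply/eqP; rewrite -sqrf_eq0 -oppr_eq0; apply/eqP; rewrite -q6; ring.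
subst x3 x5; have [x10|x1_neq0] := eqVneq x1 0.
  subst x1; move: q1; rewrite expr0n /= sub0r => /eqP; rewrite oppr_eq0 mulf_eq0.
  by case/orP => /eqP x0; [move: n1 | move: n2]; rewrite /line1 /line2 x0 !eqxx.
have x14 : x1 + x4 = 0 by apply: (mulfI x1_neq0); rewrite mulr0 -q7; ring.
have x12 : x1 + x2 = 0 by apply: (mulfI x1_neq0); rewrite mulr0 -q8; ring.
by move: n3; rewrite /line3 x14 x12 !eqxx.
Qed.

Definition veronese (l a b c x7 : int) : seq int :=
  [:: l * a * b; l * a ^+ 2; l * c * a; l * b ^+ 2; l * c * b; l * c ^+ 2; x7].

Lemma inU_veronese (l a b c x7 : int) : 0 < l -> c != 0 ->
  c * x7 = - (l * a * b * (a + b)) -> app7 inU (veronese l a b c x7).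
Proof.
move=> l0 c0 e7; rewrite /app7 /inU /onS /line1 /line2 /line3 /=.
have x6_neq0 : l * c ^+ 2 != 0 := mulf_neq0 (lt0r_neq0 l0) (expf_neq0 _ c0).
rewrite (negbTE x6_neq0) !andbF !andbT.
have -> : (l * a * b) ^+ 2 + l * a * b * (l * b ^+ 2) + l * c * b * x7
          = l * b * (c * x7) + l ^+ 2 * a * b ^+ 2 * (a + b) by ring.
have -> : l * a * b * (l * a ^+ 2) + (l * a * b) ^+ 2 + l * c * a * x7
          = l * a * (c * x7) + l ^+ 2 * a ^+ 2 * b * (a + b) by ring.
have -> : l * a * b * (l * c * a) + l * a * b * (l * c * b) + l * c ^+ 2 * x7
          = l * c * (c * x7) + l ^+ 2 * a * b * c * (a + b) by ring.
by rewrite e7; repeat (apply/andP; split); apply/eqP; ring.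
Qed.

Lemma primitive_veronese (l a b c x7 : int) : coprimez (gcdz a b) c ->
  primitive (veronese l a b c x7) = coprimez l x7.
Proof.
move=> abc; rewrite /primitive; set g := gcd_seq _.
have : all (fun y => g %| y)%Z (veronese l a b c x7) by rewrite -dvdz_gcd_seq.
move=> /= /and5P[d1 d2 d3 d4 /and3P[d5 d6 /andP[d7 _]]].
apply/eqP/idP => [g1 | lx7].
  apply: (@coprimez_dvd _ _ g); last by rewrite g1.
  have dl := dvdz_gcdl l x7.
  by rewrite dvdz_gcd_seq /= dvdz_gcdr !dvdz_mulr.
apply/dvdz_eq1; first exact: gcdz_ge0.
have : (g %| gcdz l x7)%Z by rewrite dvdz_gcd d7 (dvdz_quadratic abc).
by rewrite (eqP lx7).
Qed.

Lemma dvdz_veronese (l a b c x l' a' b' c' x' : int) : coprimez (gcdz a b) c ->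
  veronese l a b c x = veronese l' a' b' c' x' -> (l' %| l)%Z.
Proof.
move=> abc [e1 e2 e3 e4 e5 e6 _].
by apply: (dvdz_quadratic abc); rewrite ?e1 ?e2 ?e3 ?e4 ?e5 ?e6 -?mulrA dvdz_mulr.
Qed.

Lemma veronese_inj (l a b c x l' a' b' c' x' : int) :
  0 < l -> 0 < l' -> 0 < c -> 0 < c' ->
  coprimez (gcdz a b) c -> coprimez (gcdz a' b') c' ->
  veronese l a b c x = veronese l' a' b' c' x' ->
  [/\ l = l', a = a', b = b', c = c' & x = x'].
Proof.
move=> l0 l0' c0 c0' abc abc' e.
have ll' : l = l'.
  by apply: dvdz_anti_pos => //; [exact: dvdz_veronese abc' (esym e) | exact: dvdz_veronese abc e].
subst l'; case: e => _ _ e3 _ e5 e6 ->.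
have lc0 : l * c != 0 := mulf_neq0 (lt0r_neq0 l0) (lt0r_neq0 c0).
have cc' : c = c'.
  by apply/eqP; rewrite -(eqrXn2 (n := 2)) ?ltW // -(inj_eq (mulfI (lt0r_neq0 l0))) e6.
by subst c'; split => //; apply: (mulfI lc0).
Qed.

Lemma height_veronese_le (R : realType) (B : R) (l a b c x7 : int) : 0 <= l -> 0 <= B ->
  ((height (veronese l a b c x7))%:R <= B) =
  [&& `|l * a ^+ 2|%:~R <= B, `|l * b ^+ 2|%:~R <= B, `|l * c ^+ 2|%:~R <= B
    & `|x7|%:~R <= B].
Proof.
move=> l0 B0.
have cross u w : `|l * u ^+ 2|%:~R <= B -> `|l * w ^+ 2|%:~R <= B ->
    `|l * u * w|%:~R <= B.
  wlog uw : u w / `|u| <= `|w|.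
    move=> H hu hw; have [/H|/ltW/H] := lerP `|u| `|w|; first exact.
    by rewrite mulrAC; apply.
  move=> _ hw; apply: le_trans hw; rewrite ler_int !normrM -mulrA ler_wpM2l //.
  by rewrite ler_wpM2r.
rewrite height_le //=; apply/idP/idP.
  by move=> /and5P[_ -> _ -> /and3P[_ -> /andP[-> _]]].
by move=> /and4P[ha hb hc h7]; rewrite ha hb hc h7 !cross.
Qed.

Lemma veronese_of_onS x1 x2 x3 x4 x5 x6 x7 : 0 < x6 -> onS x1 x2 x3 x4 x5 x6 x7 ->
  exists l a b c, [/\ 0 < l, 0 < c, coprimez (gcdz a b) c,
    c * x7 = - (l * a * b * (a + b)) & [:: x1; x2; x3; x4; x5; x6; x7] = veronese l a b c x7].
Proof.
move=> x6_gt0 /and5P[_ _ _ /eqP q4 /and5P[/eqP q5 /eqP q6 _ _ /eqP q9]].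
have [a [b [c [g [g_gt0 abc x3E x5E x6E]]]]] := factor_gcdz3 x3 x5 (lt0r_neq0 x6_gt0).
subst x3 x5 x6; have g_neq0 := lt0r_neq0 g_gt0.
have c_gt0 : 0 < c by move: x6_gt0; rewrite pmulr_lgt0.
have cancel_g (u v : int) : g * u - g * v = 0 -> u = v.
  by move=> /eqP; rewrite -mulrBr mulf_eq0 (negbTE g_neq0) subr_eq0 => /eqP.
have e1 : c * x1 = g * a * b by apply: cancel_g; rewrite -q4; ring.
have e2 : c * x2 = g * a ^+ 2 by apply: cancel_g; rewrite -q5; ring.
have e4 : c * x4 = g * b ^+ 2 by apply: cancel_g; rewrite -q6; ring.
have /dvdzP[l gE] : (c %| g)%Z.
  apply: (dvdz_quadratic abc); rewrite -?e1 -?e2 -?e4.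
  1,2,4: exact/dvdz_mulr/dvdzz.
  1,2: exact/dvdz_mulr/dvdz_mull/dvdzz.
  exact/dvdz_mull/dvdz_mull/dvdzz.
subst g; have l_gt0 : 0 < l by move: g_gt0; rewrite pmulr_lgt0.
have c_neq0 := lt0r_neq0 c_gt0.
have x1E : x1 = l * a * b by apply: (mulfI c_neq0); rewrite e1; ring.
have x2E : x2 = l * a ^+ 2 by apply: (mulfI c_neq0); rewrite e2; ring.
have x4E : x4 = l * b ^+ 2 by apply: (mulfI c_neq0); rewrite e4; ring.
subst x1 x2 x4; exists l, a, b, c; split => //.
  apply: (mulfI (mulf_neq0 (lt0r_neq0 l_gt0) c_neq0)); apply/eqP.
  by rewrite -subr_eq0; apply/eqP; rewrite -q9; ring.
by rewrite /veronese; congr [:: _; _; _; _; _; _; _]; ring.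
Qed.

Definition torsor (s0 s1 s2 s3 y1 y2 y3 : int) : bool :=
  [&& s1 * y1 - s2 * y2 + s3 * y3 == 0, [&& 0 < s0, 0 < s1, 0 < s2 & 0 < s3],
      [&& coprimez y1 (s0 * s2 * s3), coprimez y2 (s0 * s1 * s3)
        & coprimez y3 (s0 * s1 * s2)]
    & [&& coprimez s1 s2, coprimez s1 s3 & coprimez s2 s3]].

Lemma torsorP s0 s1 s2 s3 y1 y2 y3 :
  reflect [/\ s1 * y1 - s2 * y2 + s3 * y3 = 0, [/\ 0 < s0, 0 < s1, 0 < s2 & 0 < s3],
              [/\ coprimez y1 (s0 * s2 * s3), coprimez y2 (s0 * s1 * s3)
                & coprimez y3 (s0 * s1 * s2)]
            & [/\ coprimez s1 s2, coprimez s1 s3 & coprimez s2 s3]]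
          (torsor s0 s1 s2 s3 y1 y2 y3).
Proof.
apply: (iffP and4P) => [[/eqP rel /and4P[? ? ? ?] /and3P[? ? ?] /and3P[? ? ?]] |].
  by split.
by move=> [rel pos cy cs]; split; [apply/eqP | apply/and4P | apply/and3P | apply/and3P].
Qed.

Definition param (s0 s1 s2 s3 y1 y2 y3 : int) : seq int :=
  veronese s0 (s1 * y1) (- (s2 * y2)) (s0 * s1 * s2 * s3) (- (y1 * y2 * y3)).

Section Torsor.
Variables s0 s1 s2 s3 y1 y2 y3 : int.
Hypothesis tors : torsor s0 s1 s2 s3 y1 y2 y3.

Lemma torsor_coprime_abc :
  coprimez (gcdz (s1 * y1) (- (s2 * y2))) (s0 * s1 * s2 * s3).
Proof.
case/torsorP: tors => _ _ [c1 c2 _] [c12 _ _].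
apply/coprimez_primeP => p pp.
have cop m n : coprimez m n -> (p%:Z %| m)%Z -> (p%:Z %| n)%Z -> False.
  by move/coprimez_primeP; apply.
rewrite dvdz_gcd rpredN !prime_dvdzM // => /andP[].
case/orP => ha; case/orP => hb hc.
- exact: cop c12 ha hb.
- by apply: cop c2 hb _; rewrite !prime_dvdzM // ha orbT.
- by apply: cop c1 ha _; rewrite !prime_dvdzM // hb orbT.
move: hc => /orP[/orP[/orP[] |] |] hs.
- by apply: cop c1 ha _; rewrite !prime_dvdzM // hs.
- by apply: cop c2 hb _; rewrite !prime_dvdzM // hs orbT.
- by apply: cop c1 ha _; rewrite !prime_dvdzM // hs orbT.
- by apply: cop c1 ha _; rewrite !prime_dvdzM // hs orbT.
Qed.

Lemma torsor_coprime_s0 : coprimez s0 (- (y1 * y2 * y3)).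
Proof.
case/torsorP: tors => _ _ [c1 c2 c3] _.
rewrite coprimezN !coprimezMr ![coprimez s0 _]coprimez_sym.
move: c1 c2 c3; rewrite !coprimezMr.
by move=> /andP[/andP[-> _] _] /andP[/andP[-> _] _] /andP[/andP[-> _] _].
Qed.

Lemma torsor_gcds : [/\ gcdz (s0 * s1 * s2 * s3) (s1 * y1) = s1,
  gcdz (s0 * s1 * s2 * s3) (- (s2 * y2)) = s2 &
  gcdz (s0 * s1 * s2 * s3) (s1 * y1 + - (s2 * y2)) = s3].
Proof.
case/torsorP: tors => rel [_ h1 h2 h3] [c1 c2 c3] _.
have gcdE s m y : 0 < s -> coprimez y m -> gcdz (s * m) (s * y) = s.
  by move=> s_gt0 cop; apply/eqP; rewrite gcdzMl_eq.
have -> : s1 * y1 + - (s2 * y2) = - (s3 * y3) by rewrite -[RHS]add0r -rel; ring.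
rewrite !gcdzN; split.
- by rewrite (_ : s0 * s1 * s2 * s3 = s1 * (s0 * s2 * s3)) ?gcdE //; ring.
- by rewrite (_ : s0 * s1 * s2 * s3 = s2 * (s0 * s1 * s3)) ?gcdE //; ring.
- by rewrite (_ : s0 * s1 * s2 * s3 = s3 * (s0 * s1 * s2)) ?gcdE //; ring.
Qed.

Lemma torsor_c_gt0 : 0 < s0 * s1 * s2 * s3.
Proof. by case/torsorP: tors => _ [h0 h1 h2 h3] _ _; rewrite !mulr_gt0. Qed.

Lemma primitive_param : primitive (param s0 s1 s2 s3 y1 y2 y3).
Proof. by rewrite /param primitive_veronese ?torsor_coprime_abc ?torsor_coprime_s0. Qed.

Lemma inU_param : app7 inU (param s0 s1 s2 s3 y1 y2 y3).
Proof.
case/torsorP: tors => rel [h0 _ _ _] _ _.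
apply: inU_veronese => //; first exact/lt0r_neq0/torsor_c_gt0.
have -> : s1 * y1 + - (s2 * y2) = - (s3 * y3) by rewrite -[RHS]add0r -rel; ring.
by ring.
Qed.

Lemma param_x6_gt0 : 0 < nth 0 (param s0 s1 s2 s3 y1 y2 y3) 5.
Proof.
by case/torsorP: tors => _ [h0 _ _ _] _ _; rewrite /= mulr_gt0 ?exprn_gt0 ?torsor_c_gt0.
Qed.

End Torsor.

Lemma param_inj s0 s1 s2 s3 y1 y2 y3 t0 t1 t2 t3 z1 z2 z3 :
  torsor s0 s1 s2 s3 y1 y2 y3 -> torsor t0 t1 t2 t3 z1 z2 z3 ->
  param s0 s1 s2 s3 y1 y2 y3 = param t0 t1 t2 t3 z1 z2 z3 ->
  [:: s0; s1; s2; s3; y1; y2; y3] = [:: t0; t1; t2; t3; z1; z2; z3].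
Proof.
move=> hs ht e.
case/torsorP: (hs) => rel [h0 h1 h2 h3] _ _.
case/torsorP: (ht) => rel' [h0' _ _ _] _ _.
have [E0 ea /oppr_inj eb ec _] := veronese_inj h0 h0' (torsor_c_gt0 hs) (torsor_c_gt0 ht)
  (torsor_coprime_abc hs) (torsor_coprime_abc ht) e.
have [g1 g2 g3] := torsor_gcds hs; have [g1' g2' g3'] := torsor_gcds ht.
subst t0.
have E1 : s1 = t1 by rewrite -g1 -g1' ec ea.
have E2 : s2 = t2 by rewrite -g2 -g2' ec eb.
have E3 : s3 = t3 by rewrite -g3 -g3' ec ea eb.
subst t1 t2 t3.
have E4 : y1 = z1 by apply: (mulfI (lt0r_neq0 h1)).
have E5 : y2 = z2 by apply: (mulfI (lt0r_neq0 h2)).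
have E6 : y3 = z3.
  apply: (mulfI (lt0r_neq0 h3)); apply: (addrI (s1 * y1 - s2 * y2)).
  by rewrite rel ea eb rel'.
by rewrite E4 E5 E6.
Qed.

Lemma height_param_le (R : realType) (B : R) s0 s1 s2 s3 y1 y2 y3 : 0 <= s0 -> 0 <= B ->
  ((height (param s0 s1 s2 s3 y1 y2 y3))%:R <= B) = (Psi R s0 s1 s2 s3 y1 y2 y3 <= B).
Proof.
move=> s0_ge0 B0; rewrite height_veronese_le // /Psi !ge_max normrN.
have -> : s0 * (s1 * y1) ^+ 2 = s0 * s1 ^+ 2 * y1 ^+ 2 by ring.
have -> : s0 * (- (s2 * y2)) ^+ 2 = s0 * s2 ^+ 2 * y2 ^+ 2 by ring.
have -> : s0 * (s0 * s1 * s2 * s3) ^+ 2 = s0 ^+ 3 * s1 ^+ 2 * s2 ^+ 2 * s3 ^+ 2 by ring.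
by do 4 case: (_ <= B).
Qed.

Lemma torsor_of_coprime (a b c : int) : 0 < c -> coprimez (gcdz a b) c ->
  exists s0 s1 s2 s3 y1 y2 y3, torsor s0 s1 s2 s3 y1 y2 y3 /\
    [/\ a = s1 * y1, b = - (s2 * y2) & c = s0 * s1 * s2 * s3].
Proof.
move=> c_gt0 abc; have c_neq0 := lt0r_neq0 c_gt0.
have [c12 c13 c23] := coprimez_gcd_pairwise abc.
have s123_dvd : (gcdz c a * gcdz c b * gcdz c (a + b) %| c)%Z.
  by rewrite Gauss_dvdz ?coprimezMl ?c13 ?c23 // Gauss_dvdz // !dvdz_gcdl.
have [y1 aE] := dvdzP (dvdz_gcdr c a).
have [y2 bE] := dvdzP (dvdz_gcdr c b).
have [y3 abE] := dvdzP (dvdz_gcdr c (a + b)).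
set s1 := gcdz c a in c12 c13 s123_dvd aE *; have g1 : gcdz c a = s1 by [].
set s2 := gcdz c b in c12 c23 s123_dvd bE *; have g2 : gcdz c b = s2 by [].
set s3 := gcdz c (a + b) in c13 c23 s123_dvd abE *.
have g3 : gcdz c (a + b) = s3 by [].
have h1 : 0 < s1 by apply: gcdz_gt0.
have h2 : 0 < s2 by apply: gcdz_gt0.
have h3 : 0 < s3 by apply: gcdz_gt0.
have [s0 cE] := dvdzP s123_dvd.
clearbody s1 s2 s3.
have cop s m y u v : 0 < s -> gcdz u v = s -> u = s * m -> v = s * y -> coprimez y m.
  by move=> s_gt0 g uE vE; rewrite -(@gcdzMl_eq s m y s_gt0) -uE -vE g.
have h0 : 0 < s0 by move: c_gt0; rewrite cE pmulr_lgt0 // !mulr_gt0.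
exists s0, s1, s2, s3, y1, (- y2), (- y3).
split; last by split; [rewrite aE | rewrite bE | rewrite cE]; ring.
apply/torsorP; split => //.
- transitivity (y1 * s1 + y2 * s2 - y3 * s3); first ring.
  by rewrite -aE -bE -abE subrr.
split; rewrite ?coprimeNz.
- by apply: (cop s1 _ _ c a) => //; [rewrite cE | rewrite aE]; ring.
- by apply: (cop s2 _ _ c b) => //; [rewrite cE | rewrite bE]; ring.
- by apply: (cop s3 _ _ c (a + b)) => //; [rewrite cE | rewrite abE]; ring.
Qed.

Lemma torsor_of_veronese (l a b c x7 : int) : 0 < l -> 0 < c -> coprimez (gcdz a b) c ->
  coprimez l x7 -> c * x7 = - (l * a * b * (a + b)) ->
  exists s0 s1 s2 s3 y1 y2 y3,
    torsor s0 s1 s2 s3 y1 y2 y3 /\ param s0 s1 s2 s3 y1 y2 y3 = veronese l a b c x7.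
Proof.
move=> l_gt0 c_gt0 abc lx7 e7.
have [s0 [s1 [s2 [s3 [y1 [y2 [y3 [T [aE bE cE]]]]]]]]] := torsor_of_coprime c_gt0 abc.
case/torsorP: (T) => rel [h0 h1 h2 h3] _ _; subst a b c.
have s123_neq0 : s1 * s2 * s3 != 0 by rewrite lt0r_neq0 // !mulr_gt0.
have e : s0 * x7 = l * (- (y1 * y2 * y3)).
  apply: (mulfI s123_neq0); transitivity (s0 * s1 * s2 * s3 * x7); first ring.
  rewrite e7; have -> : s1 * y1 - s2 * y2 = - (s3 * y3) by rewrite -[RHS]add0r -rel; ring.
  by ring.
have ls0 : l = s0.
  apply: dvdz_anti_pos => //.
    by rewrite -(Gauss_dvdzl _ lx7) e; apply/dvdz_mulr/dvdzz.
  by rewrite -(Gauss_dvdzl _ (torsor_coprime_s0 T)) -e; apply/dvdz_mulr/dvdzz.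
subst l; exists s0, s1, s2, s3, y1, y2, y3; split => //.
suff -> : x7 = - (y1 * y2 * y3) by [].
by apply: (mulfI (lt0r_neq0 h0)).
Qed.

Lemma torsor_y1_eq0 s0 s1 s2 s3 y2 y3 : torsor s0 s1 s2 s3 0 y2 y3 ->
  [/\ s0 = 1, s2 = 1, s3 = 1 & y3 = y2].
Proof.
case/torsorP => rel [h0 h1 h2 h3] [c1 _ _] _.
have := coprime0z_eq1 _ c1; rewrite !mulr_gt0 // => /(_ isT) e.
have [E0 E2 E3] : [/\ s0 = 1, s2 = 1 & s3 = 1] by split; nia.
by split => //; subst; lia.
Qed.

Lemma torsor_y2_eq0 s0 s1 s2 s3 y1 y3 : torsor s0 s1 s2 s3 y1 0 y3 ->
  [/\ s0 = 1, s1 = 1, s3 = 1 & y3 = - y1].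
Proof.
case/torsorP => rel [h0 h1 h2 h3] [_ c2 _] _.
have := coprime0z_eq1 _ c2; rewrite !mulr_gt0 // => /(_ isT) e.
have [E0 E1 E3] : [/\ s0 = 1, s1 = 1 & s3 = 1] by split; nia.
by split => //; subst; lia.
Qed.

Section Bounded.
Variables (R : realType) (B : R).
Hypothesis B_ge0 : 0 <= B.

Definition bounded_point (x : seq int) : bool :=
  [&& primitive x, app7 inU x & (height x)%:R <= B].

Definition bounded_torsor (s0 s1 s2 s3 y1 y2 y3 : int) : bool :=
  (Psi R s0 s1 s2 s3 y1 y2 y3 <= B) && torsor s0 s1 s2 s3 y1 y2 y3.

Lemma bounded_point_x6 (x : seq int) : bounded_point x -> nth 0 x 5 != 0.
Proof. by case/and3P => _ /inU_x6_neq0. Qed.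

(* Both [first_nz_pos] and the sign of [x6] select exactly one of [x] and [-x]. *)
Lemma N_U_x6_gt0 :
  N_U B = count (fun x => bounded_point x && (0 < nth 0 x 5)) (box 7 (Num.truncn B)).
Proof.
set s := box 7 _.
have half q : {in s, forall x, bounded_point x -> q (map -%R x) = ~~ q x} ->
    count bounded_point s = (count (predI bounded_point q) s).*2.
  apply: count_halves; [exact: box_uniq | exact: (mapK opprK) | exact: box_opp |].
  by move=> x _; rewrite /bounded_point primitive_opp app7_inU_opp height_opp.
have -> : N_U B = count (predI bounded_point first_nz_pos) s.
  rewrite /N_U; apply: eq_count => x /=; rewrite /bounded_point.
  by case: (primitive x) (first_nz_pos x) => [] []; rewrite ?andbT ?andbF.
apply: double_inj; rewrite -!half // => x _ /bounded_point_x6 x6.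
  by rewrite nth_opp oppr_gt0 lt_neqAle x6 -leNgt.
apply: first_nz_pos_opp; apply/hasP; exists (nth 0 x 5) => //.
by apply: mem_nth; move: x6; apply: contraNT; rewrite -leqNgt => /(nth_default 0) ->.
Qed.

Lemma box_of_height (x : seq int) : size x = 7%N -> (height x)%:R <= B ->
  x \in box 7 (Num.truncn B).
Proof.
move=> sx; rewrite height_le // mem_box sx eqxx => /allP xB; apply/allP => a /xB.
by rewrite -natr_absz truncn_ge_nat.
Qed.

Lemma absz_le_dvd (z w : int) : (z %| w)%Z -> w != 0 -> `|w|%:~R <= B ->
  (`|z| <= Num.truncn B)%N.
Proof.
move=> zw w0 wB; rewrite truncn_ge_nat //; apply: le_trans wB.
by rewrite -natr_absz ler_nat dvdn_leq // absz_gt0.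
Qed.

(* Each coordinate divides a nonzero quantity bounded through Psi, except [y3]
   when [y1 y2 = 0], in which case [y3 = y2] or [y3 = - y1]. *)
Lemma bounded_torsor_in_box s0 s1 s2 s3 y1 y2 y3 : bounded_torsor s0 s1 s2 s3 y1 y2 y3 ->
  [:: s0; s1; s2; s3; y1; y2; y3] \in box 7 (Num.truncn B).
Proof.
case/andP => + T; rewrite /Psi !ge_max => /andP[/andP[P1 P2] /andP[P3 P4]].
case/torsorP: (T) => _ [h0 h1 h2 h3] _ _.
have bound z w q : w = q * z -> w != 0 -> `|w|%:~R <= B -> (`|z| <= Num.truncn B)%N.
  by move=> wE; apply/absz_le_dvd/dvdzP; exists q.
have y_bound y (q : int) : q != 0 -> (y != 0 -> `|q * y ^+ 2|%:~R <= B) ->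
    (`|y| <= Num.truncn B)%N.
  move=> q0 hy; have [-> //|y0] := eqVneq y 0.
  by apply: (bound _ _ (q * y)) (hy y0); [ring | exact/mulf_neq0/expf_neq0].
have by1 : (`|y1| <= Num.truncn B)%N.
  by apply: (y_bound _ (s0 * s1 ^+ 2)) => //; rewrite lt0r_neq0 // mulr_gt0 ?exprn_gt0.
have by2 : (`|y2| <= Num.truncn B)%N.
  by apply: (y_bound _ (s0 * s2 ^+ 2)) => //; rewrite lt0r_neq0 // mulr_gt0 ?exprn_gt0.
have by3 : (`|y3| <= Num.truncn B)%N.
  have [y10|y1_neq0] := eqVneq y1 0; first by subst y1; case: (torsor_y1_eq0 T) => _ _ _ ->.
  have [y20|y2_neq0] := eqVneq y2 0.
    by subst y2; case: (torsor_y2_eq0 T) => _ _ _ ->; rewrite abszN.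
  have [-> //|y3_neq0] := eqVneq y3 0.
  by apply: (bound _ _ (y1 * y2)) P2; [ring | exact/mulf_neq0/y3_neq0/mulf_neq0].
have w1_neq0 : s0 ^+ 3 * s1 ^+ 2 * s2 ^+ 2 * s3 ^+ 2 != 0.
  by rewrite lt0r_neq0 // !mulr_gt0 ?exprn_gt0.
have bs z q : s0 ^+ 3 * s1 ^+ 2 * s2 ^+ 2 * s3 ^+ 2 = q * z -> (`|z| <= Num.truncn B)%N.
  by move=> e; apply: bound e w1_neq0 P1.
rewrite mem_box /= by1 by2 by3 !andbT.
rewrite (bs s0 (s0 ^+ 2 * s1 ^+ 2 * s2 ^+ 2 * s3 ^+ 2))
  ?(bs s1 (s0 ^+ 3 * s1 * s2 ^+ 2 * s3 ^+ 2)) ?(bs s2 (s0 ^+ 3 * s1 ^+ 2 * s2 * s3 ^+ 2))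
  ?(bs s3 (s0 ^+ 3 * s1 ^+ 2 * s2 ^+ 2 * s3)) //.
all: ring.
Qed.

Definition param_seq (v : seq int) : seq int :=
  param (nth 0 v 0) (nth 0 v 1) (nth 0 v 2) (nth 0 v 3) (nth 0 v 4) (nth 0 v 5) (nth 0 v 6).

Lemma count_points_torsor :
  count (fun x => bounded_point x && (0 < nth 0 x 5)) (box 7 (Num.truncn B)) =
  count (app7 bounded_torsor) (box 7 (Num.truncn B)).
Proof.
apply/eqP; rewrite eqn_leq; apply/andP; split.
  apply: (count_le_surj (f := param_seq)); first exact: box_uniq.
  move=> x xb /andP[/and3P[prim /and4P[onSx _ _ _] hx] x6].
  have [l [a [b [c [l_gt0 c_gt0 abc e7 xE]]]]] := veronese_of_onS x6 onSx.
  rewrite -(seq7_nth (size_mem_box xb)) in xE.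
  rewrite xE primitive_veronese // in prim.
  have [s0 [s1 [s2 [s3 [y1 [y2 [y3 [T pE]]]]]]]] := torsor_of_veronese l_gt0 c_gt0 abc prim e7.
  have bT : bounded_torsor s0 s1 s2 s3 y1 y2 y3.
    case/torsorP: (T) => _ [h0 _ _ _] _ _.
    by move: hx; rewrite /bounded_torsor T andbT xE -pE height_param_le // ltW.
  exists [:: s0; s1; s2; s3; y1; y2; y3]; last by rewrite xE -pE.
  by apply/andP; split; [exact: bounded_torsor_in_box | exact: bT].
apply: (count_le_inj (f := param_seq)); first exact: box_uniq.
  move=> v _ /andP[hP T]; case/torsorP: (T) => _ [h0 _ _ _] _ _.
  have hH : (height (param_seq v))%:R <= B by rewrite height_param_le // ltW.
  by rewrite /bounded_point primitive_param ?inU_param ?param_x6_gt0 // hH box_of_height.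
move=> v w /andP[/size_mem_box/seq7_nth vE /andP[_ Tv]].
move=> /andP[/size_mem_box/seq7_nth wE /andP[_ Tw]] e.
by rewrite vE wE; apply: param_inj Tv Tw e.
Qed.

End Bounded.

(* Negates [y1, y2, y3] in [[:: s0; s1; s2; s3; y1; y2; y3]]; the take/drop form
   makes it an involution on all sequences. *)
Definition negy (v : seq int) : seq int := take 4 v ++ map -%R (drop 4 v).

Lemma negyK : involutive negy.
Proof.
move=> v; rewrite /negy; have [v4|v4] := leqP 4 (size v).
  have st : size (take 4 v) = 4%N by rewrite size_takel.
  by rewrite take_size_cat // drop_size_cat // mapK ?cat_take_drop //; apply: opprK.
have d : drop 4 v = [::] by rewrite drop_oversize // ltnW.
have t : take 4 v = v by rewrite take_oversize // ltnW.
by rewrite d /= cats0 t d /= cats0 t.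
Qed.

Lemma negy_box (n K : nat) (v : seq int) : v \in box n K -> negy v \in box n K.
Proof.
rewrite !mem_box /negy all_cat all_abs_le_opp -all_cat size_cat size_map -size_cat.
by rewrite cat_take_drop.
Qed.

Section SignOfY1.
Variables (R : realType) (B : R).

Lemma bounded_torsor_neg s0 s1 s2 s3 y1 y2 y3 :
  bounded_torsor B s0 s1 s2 s3 (- y1) (- y2) (- y3) = bounded_torsor B s0 s1 s2 s3 y1 y2 y3.
Proof.
rewrite /bounded_torsor /torsor /Psi !coprimeNz !sqrrN !mulrN !mulNr opprK normrN.
have -> : - (s1 * y1) - - (s2 * y2) - s3 * y3 = - (s1 * y1 - s2 * y2 + s3 * y3) by ring.
by rewrite oppr_eq0.
Qed.

Lemma Tcond_bounded_torsor s0 s1 s2 s3 y1 y2 y3 :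
  Tcond B s0 s1 s2 s3 y1 y2 y3 = bounded_torsor B s0 s1 s2 s3 y1 y2 y3 && (0 < y1).
Proof. by rewrite /Tcond /bounded_torsor /torsor; case: (0 < y1); rewrite ?andbT ?andbF. Qed.

Lemma count_torsor_y1 :
  count (app7 (bounded_torsor B)) (box 7 (Num.truncn B)) =
  ((T_count B).*2 + count (fun v => app7 (bounded_torsor B) v && (nth 0 v 4 == 0 :> int))
                          (box 7 (Num.truncn B)))%N.
Proof.
rewrite (count_split _ (fun v : seq int => nth 0 v 4 != 0)).
congr addn; last by apply: eq_count => v /=; rewrite negbK.
rewrite (count_halves (q := fun v : seq int => 0 < nth 0 v 4) (box_uniq _ _) negyK
  (@negy_box _ _)).
- congr double; apply: eq_count => v; rewrite /= Tcond_bounded_torsor -andbA.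
  by congr andb; apply: andb_idl => /lt0r_neq0.
- move=> v /size_mem_box/seq7_nth vE; rewrite vE /negy /= /app7 /= bounded_torsor_neg.
  by rewrite oppr_eq0.
- move=> v /size_mem_box/seq7_nth vE; rewrite vE /negy /= => /andP[_ y0].
  by rewrite oppr_gt0 lt_neqAle y0 -leNgt.
Qed.

Lemma bounded_torsor_y1_eq0 s0 s1 s2 s3 y2 y3 : bounded_torsor B s0 s1 s2 s3 0 y2 y3 ->
  [/\ [:: s0; s1; s2; s3; 0; y2; y3] = [:: 1; s1; 1; 1; 0; y2; y2],
      `|s1 ^+ 2|%:~R <= B & `|y2 ^+ 2|%:~R <= B].
Proof.
case/andP => hP /torsor_y1_eq0[E0 E2 E3 ->]; subst s0 s2 s3.
by move: hP; rewrite /Psi !ge_max !expr1n !mul1r !mulr1 => /andP[/andP[-> _] /andP[_ ->]].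
Qed.

Lemma sqr_le_truncn (z : int) : 0 <= B -> `|z ^+ 2|%:~R <= B ->
  (`|z| <= Num.truncn (Num.sqrt B))%N.
Proof.
move=> B0 h; rewrite truncn_ge_nat ?sqrtr_ge0 //.
rewrite -(ger0_norm (ler0n R `|z|)) -sqrtr_sqr ler_sqrt //.
by move: h; rewrite normrX natr_absz rmorphXn.
Qed.

(* [v |-> (s1, y2)] injects these solutions into the box of side [sqrt B]. *)
Lemma count_y1_eq0_le : 1 <= B ->
  (count (fun v => app7 (bounded_torsor B) v && (nth 0 v 4 == 0 :> int))
         (box 7 (Num.truncn B)))%:R <= 9 * B.
Proof.
move=> B1; have B0 : 0 <= B by apply: le_trans B1.
set m := Num.truncn (Num.sqrt B).
have m_ge1 : (1 <= m)%N by rewrite truncn_ge_nat ?sqrtr_ge0 // -sqrtr1 ler_sqrt.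
have m_le : (m%:R : R) <= Num.sqrt B by rewrite truncn_le sqrtr_ge0.
apply: le_trans (_ : ((9 * m ^ 2)%N)%:R <= _); last first.
  by rewrite natrM natrX ler_pM2l // -(sqr_sqrtr B0) lerXn2r ?nnegrE ?sqrtr_ge0.
rewrite ler_nat; apply: leq_trans (_ : count predT (box 2 m) <= _)%N; last first.
  by rewrite count_predT size_box; nia.
apply: (count_le_inj (f := fun v : seq int => [:: nth 0 v 1; nth 0 v 5])).
- exact: box_uniq.
- move=> v _ /andP[hv /eqP v4]; move: hv; rewrite /app7 v4.
  by case/bounded_torsor_y1_eq0 => _ s1B y2B; rewrite mem_box /= !sqr_le_truncn.
move=> v w /andP[/size_mem_box/seq7_nth vE /andP[hv /eqP v4]].
move=> /andP[/size_mem_box/seq7_nth wE /andP[hw /eqP w4]] [e1 e5].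
move: hv hw; rewrite /app7 v4 w4.
move=> /bounded_torsor_y1_eq0[E _ _] /bounded_torsor_y1_eq0[E' _ _].
by rewrite vE wE v4 w4 E E' e1 e5.
Qed.

End SignOfY1.

Theorem lemma3p3 (R : realType) :
  exists C : R, forall B : R, 1 <= B ->
    `|(N_U B)%:R - 2 * (T_count B)%:R| <= C * B.
Proof.
exists 9 => B B1; have B0 : 0 <= B by apply: le_trans B1.
rewrite N_U_x6_gt0 count_points_torsor // count_torsor_y1 natrD -muln2 natrM addrAC.
by rewrite mulrC subrr add0r ger0_norm // count_y1_eq0_le.
Qed.
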